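(* Let $G$ be a TDLC-group of type $\mathrm{FP}_{n+1}$, and let $(\mathbb{Q}[\Omega_i],\partial_i)$ and $(\mathbb{Q}[\Lambda_i],\delta_i)$ be two partial proper permutation resolutions of $\mathbb{Q}$ of finite type in degrees $0,\dots,n+1$. Then $G$ satisfies the weak $n$-dimensional linear isoperimetric inequality with respect to $(\mathbb{Q}[\Lambda_i],\delta_i)$ if and only if it does with respect to $(\mathbb{Q}[\Omega_i],\partial_i)$.
   Context: A TDLC-group is a totally disconnected locally compact Hausdorff topological group. A discrete $\mathbb{Q}[G]$-module is a left $\mathbb{Q}[G]$-module in which every element has open stabilizer. A $G$-set $\Omega$ is proper if all point stabilizers are compact open; $\mathbb{Q}[\Omega]$ is then a proper permutation module (projective among discrete modules), finitely generated iff $\Omega/G$ is finite, with $\ell_1$-norm $\|\sum a_\omega\omega\|_1=\sum|a_\omega|$. A partial proper permutation resolution of finite type in degrees $0,\dots,n+1$ is an exact sequence $\mathbb{Q}[\Omega_{n+1}]\xrightarrow{\partial_{n+1}}\mathbb{Q}[\Omega_n]\xrightarrow{\partial_n}\cdots\to\mathbb{Q}[\Omega_0]\to\mathbb{Q}\to0$ of discrete modules with each $\Omega_i$ a proper $G$-set with finitely many orbits; $G$ has type $\mathrm{FP}_{n+1}$ if one exists. $G$ satisfies the weak $n$-dimensional linear isoperimetric inequality with respect to such a resolution if there is $C>0$ with $\inf\{\|y\|_1: y\in\mathbb{Q}[\Omega_{n+1}],\ \partial_{n+1}(y)=x\}\le C\|x\|_1$ for all $x\in\ker\partial_n$. *)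

From HB Require Import structures.
From mathcomp Require Import all_boot all_order all_algebra.
From Stdlib Require Import List.
Set Implicit Arguments. Unset Strict Implicit. Unset Printing Implicit Defensive.
Import Order.TTheory GRing.Theory Num.Theory.
Local Open Scope ring_scope.

Definition is_topology (T : Type) (open : (T -> Prop) -> Prop) : Prop :=
  open (fun _ => True) /\ open (fun _ => False) /\
  (forall U V, open U -> open V -> open (fun x => U x /\ V x)) /\
  (forall (I : Type) (F : I -> T -> Prop),
      (forall i, open (F i)) -> open (fun x => exists i, F i x)).

Definition compact (T : Type) (open : (T -> Prop) -> Prop) (K : T -> Prop) : Prop :=
  forall (I : Type) (F : I -> T -> Prop),
    (forall i, open (F i)) -> (forall x, K x -> exists i, F i x) ->
    exists l : list I, forall x, K x -> exists i, List.In i l /\ F i x.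

Definition hausdorff (T : Type) (open : (T -> Prop) -> Prop) : Prop :=
  forall x y : T, x <> y -> exists U V, open U /\ open V /\ U x /\ V y /\
    (forall z, U z -> V z -> False).

Definition locally_compact (T : Type) (open : (T -> Prop) -> Prop) : Prop :=
  forall x : T, exists U K, open U /\ U x /\ (forall y, U y -> K y) /\ compact open K.

Definition connected (T : Type) (open : (T -> Prop) -> Prop) (S : T -> Prop) : Prop :=
  forall U V, open U -> open V -> (forall x, S x -> U x \/ V x) ->
    (forall x, S x -> U x -> V x -> False) ->
    (forall x, S x -> U x) \/ (forall x, S x -> V x).

Definition totally_disconnected (T : Type) (open : (T -> Prop) -> Prop) : Prop :=
  forall S, connected open S -> forall x y, S x -> S y -> x = y.

Record tdlc_group := TDLCGroup {
  gcar :> Type;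
  gmul : gcar -> gcar -> gcar;
  ginv : gcar -> gcar;
  gone : gcar;
  gopen : (gcar -> Prop) -> Prop;
  gmulA : forall x y z, gmul x (gmul y z) = gmul (gmul x y) z;
  gmul1 : forall x, gmul gone x = x;
  gmulV : forall x, gmul (ginv x) x = gone;
  gtop : is_topology gopen;
  (* multiplication G x G -> G continuous for the product topology *)
  gmul_cont : forall W, gopen W -> forall x y, W (gmul x y) ->
      exists U V, gopen U /\ gopen V /\ U x /\ V y /\
        (forall a b, U a -> V b -> W (gmul a b));
  ginv_cont : forall W, gopen W -> gopen (fun x => W (ginv x));
  ghausdorff : hausdorff gopen;
  glocally_compact : locally_compact gopen;
  gtot_disc : totally_disconnected gopen
}.

Section Modules.
Variable G : tdlc_group.

Definition is_action (Om : Type) (act : G -> Om -> Om) : Prop :=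
  (forall w, act (@gone G) w = w) /\
  (forall g h w, act (@gmul G g h) w = act g (act h w)).

Definition stab (Om : Type) (act : G -> Om -> Om) (w : Om) : G -> Prop :=
  fun g => act g w = w.

Definition proper_gset_fin (Om : Type) (act : G -> Om -> Om) : Prop :=
  is_action act /\
  (forall w, gopen (stab act w) /\ compact (@gopen G) (stab act w)) /\
  (exists reps : list Om, forall w, exists v, List.In v reps /\ exists g, act g v = w).

(* Q[Om] : finitely supported functions Om -> rat *)
Definition finsupp (Om : Type) (f : Om -> rat) : Prop :=
  exists s : list Om, forall w, f w != 0 -> List.In w s.

Definition is_l1 (Om : Type) (f : Om -> rat) (r : rat) : Prop :=
  exists s : list Om, List.NoDup s /\ (forall w, f w != 0 -> List.In w s) /\
    r = \sum_(w <- s) `|f w|.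

Definition fadd (Om : Type) (f1 f2 : Om -> rat) : Om -> rat := fun w => f1 w + f2 w.
Definition fscale (Om : Type) (c : rat) (f : Om -> rat) : Om -> rat := fun w => c * f w.
Definition gact (Om : Type) (act : G -> Om -> Om) (g : G) (f : Om -> rat) : Om -> rat :=
  fun w => f (act (@ginv G g) w).

Definition is_morph (A B : Type) (actA : G -> A -> A) (actB : G -> B -> B)
    (d : (A -> rat) -> (B -> rat)) : Prop :=
  (forall f, finsupp f -> finsupp (d f)) /\
  (forall f1 f2, finsupp f1 -> finsupp f2 -> d (fadd f1 f2) =1 fadd (d f1) (d f2)) /\
  (forall c f, finsupp f -> d (fscale c f) =1 fscale c (d f)) /\
  (forall g f, finsupp f -> d (gact actA g f) =1 gact actB g (d f)).

Definition is_aug (A : Type) (actA : G -> A -> A) (eps : (A -> rat) -> rat) : Prop :=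
  (forall f1 f2, finsupp f1 -> finsupp f2 -> eps (fadd f1 f2) = eps f1 + eps f2) /\
  (forall c f, finsupp f -> eps (fscale c f) = c * eps f) /\
  (forall g f, finsupp f -> eps (gact actA g f) = eps f).

(* Partial proper permutation resolution of finite type in degrees 0..n+1:
   Q[Om (n+1)] --d n--> Q[Om n] --> ... --d 0--> Q[Om 0] --eps--> Q --> 0,
   where d i : Q[Om (i+1)] -> Q[Om i]. *)
Definition ppres (n : nat) (Om : nat -> Type) (act : forall i, G -> Om i -> Om i)
    (d : forall i, (Om i.+1 -> rat) -> (Om i -> rat)) (eps : (Om 0%N -> rat) -> rat) : Prop :=
  (forall i, (i <= n.+1)%N -> proper_gset_fin (act i)) /\
  (forall i, (i <= n)%N -> is_morph (act i.+1) (act i) (d i)) /\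
  is_aug (act 0%N) eps /\
  (forall q : rat, exists x, finsupp x /\ eps x = q) /\
  (forall x, finsupp x -> eps x = 0 <-> exists y, finsupp y /\ d 0%N y =1 x) /\
  (* exactness at Q[Om (i+1)], for i+1 <= n *)
  (forall i, (i < n)%N -> forall x, finsupp x ->
     ((forall w, d i x w = 0) <-> exists y, finsupp y /\ d i.+1 y =1 x)).

Definition type_FP (m : nat) : Prop :=
  match m with
  | 0%N => True (* not used *)
  | n.+1 => exists (Om : nat -> Type) (act : forall i, G -> Om i -> Om i)
              (d : forall i, (Om i.+1 -> rat) -> (Om i -> rat)) (eps : (Om 0%N -> rat) -> rat),
              ppres n act d eps
  end.

Definition ker_at (Om : nat -> Type)
    (d : forall i, (Om i.+1 -> rat) -> (Om i -> rat)) (eps : (Om 0%N -> rat) -> rat)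
    (n : nat) : (Om n -> rat) -> Prop :=
  match n return (Om n -> rat) -> Prop with
  | 0%N => fun x => eps x = 0
  | k.+1 => fun x => forall w, d k x w = 0
  end.

(* The infimum inequality is spelled out: for every e > 0 some preimage y has
   |y|_1 <= C |x|_1 + e. *)
Definition weak_iso (n : nat) (Om : nat -> Type)
    (d : forall i, (Om i.+1 -> rat) -> (Om i -> rat)) (eps : (Om 0%N -> rat) -> rat) : Prop :=
  exists C : rat, 0 < C /\
    forall x : Om n -> rat, finsupp x -> ker_at d eps x ->
    forall rx, is_l1 x rx -> forall e : rat, 0 < e ->
      exists y : Om n.+1 -> rat, finsupp y /\ d n y =1 x /\
        exists ry, is_l1 y ry /\ ry <= C * rx + e.

End Modules.

(* The proof is the comparison argument for projective resolutions, carried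
   out with explicit ℓ1-bounds.
   1. Proper permutation modules are projective among discrete modules
      ([lift_morph]): a G-map φ : Q[A] -> M whose values lift through a G-map
      δ : Q[B] -> M lifts to a G-map ψ with δ ∘ ψ = φ.  A preimage of φ(a) is
      averaged over its finite orbit under the compact open stabiliser of a
      ([invariant_preimage]), and the invariant preimages are extended
      equivariantly ([equivariant_extension]) and linearly ([linear_extension]).
   2. A G-map out of a finitely generated permutation module is bounded for
      the ℓ1-norms ([morph_l1_bounded]): only the finitely many orbit
      representatives of the basis matter.
   3. Comparison ([comparison]): by induction on k ≤ n there are G-maps
      F : Q[Ω_k] -> Q[Λ_k] and H : Q[Λ_k] -> Q[Ω_k] compatible with the
      boundaries, and a G-map E with values in cycles agreeing with id - H F
      on cycles.
   4. A cycle x of Q[Ω_n] is filled by H' y + h x, where δ y = F x is an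
      economical filling in Λ and H', h lift H δ and E one degree up
      ([filling_maps]); the three ℓ1-bounds give the isoperimetric constant
      ([weak_iso_transfer]).  Symmetry gives the equivalence; the hypothesis
      of type FP_{n+1} only guarantees that such resolutions exist. *)
From HB Require Import structures.
From mathcomp Require Import all_boot all_order all_algebra ring lra.
From Stdlib Require Import List Permutation ClassicalEpsilon.
From Stdlib Require Import FunctionalExtensionality PropExtensionality FinFun.
Set Implicit Arguments. Unset Strict Implicit. Unset Printing Implicit Defensive.
Import Order.TTheory GRing.Theory Num.Theory.
Local Open Scope ring_scope.

(* Sums of rationals indexed by lists of an arbitrary type (no decidable
   equality), the setting in which supports of vectors of Q[Ω] live. *)
Section ListSums.
Variable A : Type.
Implicit Types (l t u : list A) (F : A -> rat).

Lemma sum_perm F l l' : Permutation l l' ->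
  \sum_(w <- l) F w = \sum_(w <- l') F w.
Proof.
elim=> //= [x a b _ IH|x y a|a b c _ IH1 _ IH2].
- by rewrite !big_cons IH.
- by rewrite !big_cons addrCA.
- by rewrite IH1 IH2.
Qed.

Lemma sum_map (B : Type) (f : B -> A) F (l : list B) :
  \sum_(w <- List.map f l) F w = \sum_(w <- l) F (f w).
Proof. by elim: l => [|a l IH] /=; rewrite ?big_nil // !big_cons IH. Qed.

Lemma eq_sum_in F F' l : (forall w, In w l -> F w = F' w) ->
  \sum_(w <- l) F w = \sum_(w <- l) F' w.
Proof.
elim: l => [|a l IH] h; rewrite ?big_nil // !big_cons h; last by left.
by rewrite IH // => w hw; apply: h; right.
Qed.

Lemma sum_filter0 (p : A -> bool) F l : (forall w, ~~ p w -> F w = 0) ->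
  \sum_(w <- List.filter p l) F w = \sum_(w <- l) F w.
Proof.
move=> H; elim: l => [|a l IH] /=; first by rewrite big_nil.
by case E: (p a); rewrite !big_cons IH // H ?E // add0r.
Qed.

Lemma sum_in_le F l v : (forall w, 0 <= F w) -> In v l -> F v <= \sum_(w <- l) F w.
Proof.
move=> H0; elim: l => [//|a l IH] /= [E|Hv]; rewrite big_cons.
- by subst a; rewrite lerDl; apply: sumr_ge0.
- by rewrite -[F v]add0r; apply: lerD => //; apply: IH.
Qed.

Lemma sum_incl F l l' : (forall w, 0 <= F w) -> NoDup l -> NoDup l' ->
  incl l l' -> \sum_(w <- l) F w <= \sum_(w <- l') F w.
Proof.
move=> H0 ndl; elim: ndl l' => [|a l0 nal _ IH] l' ndl' inc.
  by rewrite big_nil; apply: sumr_ge0.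
have [l1 [l2 El']] := in_split a l' (inc a (or_introl erefl)); subst l'.
rewrite (sum_perm F (Permutation_sym (Permutation_middle l1 l2 a))) !big_cons lerD2l.
apply: IH; first exact: (NoDup_remove_1 l1 l2 a ndl').
move=> w wl; have : In w (l1 ++ a :: l2) by apply: inc; right.
rewrite !in_app_iff /= => -[|[E|]]; [by left| |by right].
by subst w.
Qed.

Lemma sum_le_cover F u c : (forall w, 0 <= F w) -> NoDup u -> NoDup c ->
  (forall w, F w != 0 -> In w c) -> \sum_(w <- u) F w <= \sum_(w <- c) F w.
Proof.
move=> H0 nu nc cov.
have H w : ~~ (F w != 0) -> F w = 0 by rewrite negbK => /eqP.
rewrite -(sum_filter0 u H); apply: sum_incl => //; first exact: NoDup_filter.
by move=> w; rewrite filter_In => -[_]; apply: cov.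
Qed.

Lemma sum_indep (x : A -> rat) F t1 t2 : NoDup t1 -> NoDup t2 ->
  (forall w, x w != 0 -> In w t1) -> (forall w, x w != 0 -> In w t2) ->
  (forall w, x w = 0 -> F w = 0) ->
  \sum_(w <- t1) F w = \sum_(w <- t2) F w.
Proof.
move=> n1 n2 c1 c2 HF.
have H w : ~~ (x w != 0) -> F w = 0 by rewrite negbK => /eqP; apply: HF.
rewrite -(sum_filter0 t1 H) -(sum_filter0 t2 H).
apply: sum_perm; apply: NoDup_Permutation; try exact: NoDup_filter.
by move=> w; rewrite !filter_In; split=> -[_ h]; split=> //; [apply: c2|apply: c1].
Qed.

End ListSums.

(* Elementary group theory for the abstract group structure of [tdlc_group],
   whose axioms only provide left identity and left inverses. *)
Section GroupFacts.
Variable G : tdlc_group.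
Local Notation "x * y" := (@gmul G x y).
Local Notation "1" := (@gone G).
Implicit Types g h : G.

Lemma gmulgV g : g * ginv g = 1.
Proof.
rewrite -[LHS](gmul1 (g * ginv g)) -{1}(gmulV (ginv g)) -gmulA.
by rewrite (gmulA (ginv g) g) gmulV gmul1 gmulV.
Qed.

Lemma gmulg1 g : g * 1 = g.
Proof. by rewrite -(gmulV g) gmulA gmulgV gmul1. Qed.

Lemma gmulKV g h : g * (ginv g * h) = h.
Proof. by rewrite gmulA gmulgV gmul1. Qed.

Lemma ginv_uniq g h : g * h = 1 -> g = ginv h.
Proof. by move=> E; rewrite -[g]gmulg1 -(gmulgV h) gmulA E gmul1. Qed.

Lemma ginvM g h : ginv (g * h) = ginv h * ginv g.
Proof.
by symmetry; apply: ginv_uniq; rewrite -gmulA (gmulA (ginv g)) gmulV gmul1 gmulV.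
Qed.

Lemma ginv1 : ginv 1 = 1.
Proof. by symmetry; apply: ginv_uniq; rewrite gmul1. Qed.

End GroupFacts.

Section Actions.
Variables (G : tdlc_group) (Om : Type) (act : G -> Om -> Om).
Hypothesis hact : is_action act.

Lemma act1 w : act (@gone G) w = w. Proof. by case: hact. Qed.
Lemma actM g h w : act (gmul g h) w = act g (act h w). Proof. by case: hact. Qed.
Lemma actVK g w : act (ginv g) (act g w) = w.
Proof. by rewrite -actM gmulV act1. Qed.
Lemma actKV g w : act g (act (ginv g) w) = w.
Proof. by rewrite -actM gmulgV act1. Qed.
Lemma act_inj g x y : act g x = act g y -> x = y.
Proof. by move=> E; rewrite -(actVK g x) E actVK. Qed.

Lemma gactM g h f : gact act (gmul g h) f = gact act g (gact act h f).
Proof. by apply: functional_extensionality => u; rewrite /gact ginvM actM. Qed.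
Lemma gact1 f : gact act (@gone G) f = f.
Proof. by apply: functional_extensionality => u; rewrite /gact ginv1 act1. Qed.
Lemma gact_inj g f1 f2 : gact act g f1 = gact act g f2 -> f1 = f2.
Proof. by move=> E; rewrite -(gact1 f1) -(gmulV g) gactM E -gactM gmulV gact1. Qed.

Lemma stab1 w : stab act w (@gone G).
Proof. exact: act1. Qed.
Lemma stabM w g h : stab act w g -> stab act w h -> stab act w (gmul g h).
Proof. by rewrite /stab => hg hh; rewrite actM hh. Qed.
Lemma stabV w g : stab act w g -> stab act w (ginv g).
Proof. by rewrite /stab => hg; rewrite -{1}hg actVK. Qed.

End Actions.

Definition dlt (B : Type) (w : B) : B -> rat :=
  fun u => if excluded_middle_informative (w = u) then 1 else 0.
Definition zf (B : Type) : B -> rat := fun _ => 0.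
Definition fsub (B : Type) (f1 f2 : B -> rat) : B -> rat := fun w => f1 w - f2 w.
Definition lc (I B : Type) (t : list I) (c : I -> rat) (F : I -> B -> rat) : B -> rat :=
  fun u => \sum_(i <- t) c i * F i u.

Definition covers (B : Type) (t : list B) (x : B -> rat) : Prop :=
  forall w, x w != 0 -> In w t.

(* The ℓ1-norm of [x] computed along the list [t]; it is the ℓ1-norm of x
   when [t] is a duplicate-free enumeration of a superset of its support. *)
Definition l1 (B : Type) (t : list B) (x : B -> rat) : rat := \sum_(w <- t) `|x w|.

Section Vectors.
Variable B : Type.
Implicit Types (f x : B -> rat) (t : list B).

Lemma finsupp0 : finsupp (@zf B).
Proof. by exists nil => w; rewrite /zf eqxx. Qed.

Lemma finsupp_add f1 f2 : finsupp f1 -> finsupp f2 -> finsupp (fadd f1 f2).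
Proof.
move=> [s1 H1] [s2 H2]; exists (s1 ++ s2) => w; rewrite /fadd in_app_iff => Hw.
case E1: (f1 w == 0); last by left; apply: H1; rewrite E1.
by right; apply: H2; move/eqP: E1 Hw => ->; rewrite add0r.
Qed.

Lemma finsupp_scale c f : finsupp f -> finsupp (fscale c f).
Proof.
by move=> [s H]; exists s => w; rewrite /fscale mulf_eq0 negb_or => /andP[_]; exact: H.
Qed.

Lemma fsubE f1 f2 : fsub f1 f2 = fadd f1 (fscale (-1) f2).
Proof.
by apply: functional_extensionality => w; rewrite /fsub /fadd /fscale mulN1r.
Qed.

Lemma finsupp_sub f1 f2 : finsupp f1 -> finsupp f2 -> finsupp (fsub f1 f2).
Proof. by move=> h1 h2; rewrite fsubE; apply: finsupp_add => //; apply: finsupp_scale. Qed.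

Lemma finsupp_dlt (w : B) : finsupp (dlt w).
Proof.
exists (w :: nil) => u; rewrite /dlt.
by case: excluded_middle_informative => E; [left | rewrite eqxx].
Qed.

Lemma finsupp_nodup x : finsupp x -> exists t, NoDup t /\ covers t x.
Proof.
move=> [s H]; exists (nodup (fun a b => excluded_middle_informative (a = b)) s).
by split; [exact: NoDup_nodup | move=> w /H; rewrite nodup_In].
Qed.

Lemma covers_add t f1 f2 : covers t f1 -> covers t f2 -> covers t (fadd f1 f2).
Proof.
move=> c1 c2 w; rewrite /fadd => hw; case E: (f1 w == 0); last by apply: c1; rewrite E.
by apply: c2; move/eqP: E hw => ->; rewrite add0r.
Qed.

Lemma covers_scale t c f : covers t f -> covers t (fscale c f).
Proof. by move=> cf w; rewrite /fscale mulf_eq0 negb_or => /andP[_]; exact: cf. Qed.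

Lemma common_cover f1 f2 : finsupp f1 -> finsupp f2 ->
  exists t, NoDup t /\ covers t f1 /\ covers t f2.
Proof.
move=> [s1 H1] [s2 H2].
exists (nodup (fun a b => excluded_middle_informative (a = b)) (s1 ++ s2)).
split; first exact: NoDup_nodup.
by split=> w hw; rewrite nodup_In in_app_iff; [left; apply: H1 | right; apply: H2].
Qed.

Lemma is_l1_l1 x t : NoDup t -> covers t x -> is_l1 x (l1 t x).
Proof. by move=> nt ct; exists t. Qed.

Lemma l1_ge0 t x : 0 <= l1 t x.
Proof. exact: sumr_ge0. Qed.

Lemma l1_add t f1 f2 : l1 t (fadd f1 f2) <= l1 t f1 + l1 t f2.
Proof. by rewrite /l1 -big_split; apply: ler_sum => w _; exact: ler_normD. Qed.

Lemma lc_cons I (a : I) (s : list I) c (F : I -> B -> rat) :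
  lc (a :: s) c F = fadd (fscale (c a) (F a)) (lc s c F).
Proof. by apply: functional_extensionality => u; rewrite /lc /fadd /fscale big_cons. Qed.

Lemma lc_nil I c (F : I -> B -> rat) : lc (@nil I) c F = @zf B.
Proof. by apply: functional_extensionality => u; rewrite /lc big_nil. Qed.

Lemma finsupp_lc I (s : list I) c (F : I -> B -> rat) :
  (forall i, In i s -> finsupp (F i)) -> finsupp (lc s c F).
Proof.
elim: s => [|a s IH] H; first by rewrite lc_nil; apply: finsupp0.
rewrite lc_cons; apply: finsupp_add; first by apply: finsupp_scale; apply: H; left.
by apply: IH => i hi; apply: H; right.
Qed.

Lemma lc_dlt x t : NoDup t -> covers t x -> lc t x (@dlt B) = x.
Proof.
move=> nd cov; apply: functional_extensionality => u.
have notin s : ~ In u s -> lc s x (@dlt B) u = 0.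
  elim: s => [|a s IH] /= Hu; rewrite /lc ?big_nil // big_cons {1}/dlt.
  case: excluded_middle_informative => [E|E]; first by case: Hu; left.
  by rewrite mulr0 add0r; apply: IH => h; apply: Hu; right.
case: (excluded_middle_informative (In u t)) => Hu; last first.
  rewrite notin //; case E: (x u == 0); first by move/eqP: E.
  by case: Hu; apply: cov; rewrite E.
elim: nd Hu {cov} => [//|a s na _ IH] /= Hu; rewrite /lc big_cons {1}/dlt.
case: (excluded_middle_informative (a = u)) => [E|E].
- by subst a; rewrite mulr1 [X in _ + X]notin // addr0.
- by rewrite mulr0 add0r; apply: IH; case: Hu.
Qed.

End Vectors.

Lemma finsupp_gact (G : tdlc_group) (B : Type) (act : G -> B -> B) g (f : B -> rat) :
  is_action act -> finsupp f -> finsupp (gact act g f).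
Proof.
move=> ha [s Hs]; exists (List.map (act g) s) => w Hw.
by rewrite -(actKV ha g w); apply: in_map; exact: Hs.
Qed.

Lemma gact_dlt (G : tdlc_group) (B : Type) (act : G -> B -> B) g (w : B) :
  is_action act -> gact act g (dlt w) = dlt (act g w).
Proof.
move=> ha; apply: functional_extensionality => u; rewrite /gact /dlt.
case: excluded_middle_informative => E1; case: excluded_middle_informative => E2 //.
- by case: E2; rewrite E1 actKV.
- by case: E1; rewrite -E2 actVK.
Qed.

Lemma gact_fix_support (G : tdlc_group) (B : Type) (act : G -> B -> B) g
    (y : B -> rat) (s : list B) :
  is_action act -> covers s y -> (forall w, In w s -> act g w = w) -> gact act g y = y.
Proof.
move=> ha cov hg; apply: functional_extensionality => u; rewrite /gact.
case: (excluded_middle_informative (In u s)) => hu.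
  by rewrite -{1}(hg u hu) actVK.
have y0 v : ~ In v s -> y v = 0.
  by move=> hv; case E: (y v == 0); [apply/eqP | case: hv; apply: cov; rewrite E].
rewrite (y0 u hu) y0 // => hv; apply: hu.
by rewrite -(actKV ha g u) (hg _ hv).
Qed.

Lemma l1_gact (G : tdlc_group) (B : Type) (act : G -> B -> B) g (f : B -> rat) u c :
  is_action act -> NoDup u -> NoDup c -> covers c f -> l1 u (gact act g f) <= l1 c f.
Proof.
move=> ha nu nc cov; rewrite /l1 /gact.
rewrite -(sum_map (act (ginv g)) (fun w => `|f w|) u).
apply: sum_le_cover => //.
- by apply: Injective_map_NoDup => // x y; apply: act_inj.
- by move=> w; rewrite normr_eq0; apply: cov.
Qed.

Section Morphisms.
Variables (G : tdlc_group) (A B : Type) (actA : G -> A -> A) (actB : G -> B -> B).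
Variable d : (A -> rat) -> (B -> rat).
Hypothesis hd : is_morph actA actB d.

Lemma mfs f : finsupp f -> finsupp (d f). Proof. by case: hd => H _; apply: H. Qed.
Lemma madd f1 f2 : finsupp f1 -> finsupp f2 -> d (fadd f1 f2) = fadd (d f1) (d f2).
Proof. by case: hd => _ [H _] h1 h2; apply: functional_extensionality; apply: H. Qed.
Lemma mscale c f : finsupp f -> d (fscale c f) = fscale c (d f).
Proof. by case: hd => _ [_ [H _]] h; apply: functional_extensionality; apply: H. Qed.
Lemma mgact g f : finsupp f -> d (gact actA g f) = gact actB g (d f).
Proof. by case: hd => _ [_ [_ H]] h; apply: functional_extensionality; apply: H. Qed.

Lemma msub f1 f2 : finsupp f1 -> finsupp f2 -> d (fsub f1 f2) = fsub (d f1) (d f2).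
Proof.
by move=> h1 h2; rewrite !fsubE madd ?mscale //; apply: finsupp_scale.
Qed.

Lemma m0 : d (@zf A) = @zf B.
Proof.
have E : fscale 0 (@zf A) = @zf A.
  by apply: functional_extensionality => u; rewrite /fscale /zf mul0r.
rewrite -E mscale; last exact: finsupp0.
by apply: functional_extensionality => u; rewrite /fscale mul0r.
Qed.

Lemma mlc I (t : list I) c (F : I -> A -> rat) : (forall i, In i t -> finsupp (F i)) ->
  d (lc t c F) = lc t c (fun i => d (F i)).
Proof.
elim: t => [|a t IH] H; first by rewrite !lc_nil m0.
have Ha : finsupp (F a) by apply: H; left.
have Ht i : In i t -> finsupp (F i) by move=> hi; apply: H; right.
rewrite !lc_cons madd ?mscale ?IH //; [exact: finsupp_scale | exact: finsupp_lc].
Qed.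

Lemma m_on_basis x t : finsupp x -> NoDup t -> covers t x ->
  d x = lc t x (fun w => d (dlt w)).
Proof.
by move=> fx nt ct; rewrite -{1}(lc_dlt nt ct) mlc // => w _; exact: finsupp_dlt.
Qed.

End Morphisms.

Section MorphismConstructions.
Variables (G : tdlc_group) (A B C : Type).
Variables (actA : G -> A -> A) (actB : G -> B -> B) (actC : G -> C -> C).

Lemma is_morph_comp (d1 : (A -> rat) -> (B -> rat)) (d2 : (B -> rat) -> (C -> rat)) :
  is_morph actA actB d1 -> is_morph actB actC d2 -> is_morph actA actC (fun x => d2 (d1 x)).
Proof.
move=> h1 h2; split; [|split; [|split]].
- by move=> f hf; apply: (mfs h2); apply: (mfs h1).
- by move=> f1 f2 hf1 hf2; rewrite (madd h1) // (madd h2) //; apply: (mfs h1).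
- by move=> c f hf; rewrite (mscale h1) // (mscale h2) //; apply: (mfs h1).
- by move=> g f hf; rewrite (mgact h1) // (mgact h2) //; apply: (mfs h1).
Qed.

Lemma is_morph_sub (d1 d2 : (A -> rat) -> (B -> rat)) :
  is_morph actA actB d1 -> is_morph actA actB d2 ->
  is_morph actA actB (fun x => fsub (d1 x) (d2 x)).
Proof.
move=> h1 h2; split; [|split; [|split]].
- by move=> f hf; apply: finsupp_sub; [apply: (mfs h1)|apply: (mfs h2)].
- by move=> f1 f2 hf1 hf2 u; rewrite (madd h1) // (madd h2) // /fsub /fadd; ring.
- by move=> c f hf u; rewrite (mscale h1) // (mscale h2) // /fsub /fscale; ring.
- by move=> g f hf u; rewrite (mgact h1) // (mgact h2).
Qed.

End MorphismConstructions.

Lemma is_morph_id_sub (G : tdlc_group) (A : Type) (actA : G -> A -> A)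
    (d : (A -> rat) -> (A -> rat)) :
  is_morph actA actA d -> is_morph actA actA (fun x => fsub x (d x)).
Proof.
move=> hd; have hid : is_morph actA actA (fun x => x) by split; [|split; [|split]].
exact: (is_morph_sub hid hd).
Qed.

(* An augmentation Q[A] -> Q, seen as a G-map into the trivial module Q[unit]. *)
Definition tact (G : tdlc_group) : G -> unit -> unit := fun _ u => u.
Definition epsu (A : Type) (eps : (A -> rat) -> rat) : (A -> rat) -> (unit -> rat) :=
  fun x _ => eps x.

Lemma aug_morph (G : tdlc_group) (A : Type) (act : G -> A -> A) eps :
  is_aug act eps -> is_morph act (@tact G) (epsu eps).
Proof.
move=> [ha [hs hg]]; split; [|split; [|split]].
- by move=> f _; exists (tt :: nil) => -[] _; left.
- by move=> f1 f2 h1 h2 u; rewrite /epsu ha.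
- by move=> c f h u; rewrite /epsu hs.
- by move=> g f h u; rewrite /epsu hg.
Qed.

(* A G-map out of a permutation module with finitely many orbits is bounded
   on the basis: |φ(g.v)|_1 = |g.φ(v)|_1 ≤ |φ(v)|_1 for a representative v. *)
Lemma morph_bounded_on_basis (G : tdlc_group) (A B : Type) (actA : G -> A -> A)
    (actB : G -> B -> B) (phi : (A -> rat) -> (B -> rat)) :
  proper_gset_fin actA -> is_action actB -> is_morph actA actB phi ->
  exists M, 0 <= M /\ forall w u, NoDup u -> l1 u (phi (dlt w)) <= M.
Proof.
move=> [ha [_ [reps Hreps]]] hb hphi.
have [cf cfP] : exists cf : A -> list B, forall v,
    NoDup (cf v) /\ covers (cf v) (phi (dlt v)).
  apply: (choice (fun v c => NoDup c /\ covers c (phi (dlt v)))) => v.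
  exact/finsupp_nodup/(mfs hphi)/finsupp_dlt.
exists (\sum_(v <- reps) l1 (cf v) (phi (dlt v))).
split=> [|w u nu]; first by apply: sumr_ge0 => v _; exact: l1_ge0.
have [v [inv [g <-]]] := Hreps w.
rewrite -(gact_dlt _ _ ha) (mgact hphi _ (finsupp_dlt v)).
apply: le_trans (l1_gact g hb nu (proj1 (cfP v)) (proj2 (cfP v))) _.
by apply: (sum_in_le (F := fun v => l1 (cf v) (phi (dlt v)))) => // v'; exact: l1_ge0.
Qed.

Lemma morph_l1_bounded (G : tdlc_group) (A B : Type) (actA : G -> A -> A)
    (actB : G -> B -> B) (phi : (A -> rat) -> (B -> rat)) :
  proper_gset_fin actA -> is_action actB -> is_morph actA actB phi ->
  exists M, 0 <= M /\ forall x t u, finsupp x -> NoDup t -> covers t x -> NoDup u ->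
    l1 u (phi x) <= M * l1 t x.
Proof.
move=> hA hb hphi; have [M [M0 bM]] := morph_bounded_on_basis hA hb hphi.
exists M; split=> // x t u fx nt ct nu.
rewrite (m_on_basis hphi fx nt ct) /l1 /lc.
apply: (@le_trans _ _ (\sum_(w' <- u) \sum_(i <- t) `|x i| * `|phi (dlt i) w'|)).
  apply: ler_sum => w' _; apply: le_trans; first exact: ler_norm_sum.
  by apply: ler_sum => i _; rewrite normrM.
rewrite exchange_big /= mulr_sumr; apply: ler_sum => i _.
by rewrite -mulr_sumr mulrC; apply: ler_wpM2r => //; exact: bM.
Qed.

Section Topology.
Variable G : tdlc_group.

Lemma open_ext (P Q : G -> Prop) : gopen P -> (forall x, P x <-> Q x) -> gopen Q.
Proof.
move=> hP H; suff -> : Q = P by [].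
apply: functional_extensionality => x; apply: propositional_extensionality.
by split; apply H.
Qed.

(* x |-> g x is continuous, so {x | g x ∈ U} is open: it is the union of
   open neighbourhoods of its points given by continuity of multiplication. *)
Lemma open_ltrans (U : G -> Prop) (g : G) : gopen U -> gopen (fun x => U (gmul g x)).
Proof.
move=> hU; pose P x := U (gmul g x).
have [V hV] : exists V : {x | P x} -> G -> Prop, forall i,
    gopen (V i) /\ V i (proj1_sig i) /\ forall b, V i b -> P b.
  apply: (choice (fun i V => gopen V /\ V (proj1_sig i) /\ forall b, V b -> P b)).
  move=> [x px]; have [U' [V' [_ [oV [Ug [Vx HUV]]]]]] := gmul_cont hU px.
  by exists V'; split=> //; split=> // b Vb; apply: HUV.
have [_ [_ [_ hunion]]] := @gtop G.
apply: (open_ext (hunion _ V (fun i => proj1 (hV i)))) => x; split.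
- by move=> [i hi]; apply: (proj2 (proj2 (hV i))).
- by move=> px; exists (exist _ x px); apply: (proj1 (proj2 (hV _))).
Qed.

Lemma open_fix (B : Type) (act : G -> B -> B) :
  (forall w, gopen (stab act w)) ->
  forall L : list B, gopen (fun x => forall w, In w L -> act x w = w).
Proof.
move=> hs; have [hT [_ [hI _]]] := @gtop G; elim=> [|a L IH].
  by apply: (open_ext hT) => x; split.
apply: (open_ext (hI _ _ (hs a) IH)) => x; split.
- by move=> [h1 h2] w /= [<-|]; [apply: h1|apply: h2].
- by move=> h; split; [apply: h; left | move=> w hw; apply: h; right].
Qed.

End Topology.

(* The orbit of a finitely supported vector under a compact subset K of G is
   finite: the pointwise stabiliser U of its support is open, finitely many
   left translates k_i U cover K, and k.y = k_i.y whenever k ∈ k_i U. *)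
Lemma finite_orbit (G : tdlc_group) (B : Type) (act : G -> B -> B)
    (K : G -> Prop) (y : B -> rat) :
  is_action act -> (forall w, gopen (stab act w)) ->
  compact (@gopen G) K -> finsupp y ->
  exists Y : list (B -> rat), NoDup Y /\
    forall z, In z Y <-> exists k, K k /\ z = gact act k y.
Proof.
move=> ha hs hK [s cov].
pose U x := forall w, In w s -> act x w = w.
pose I := {k : G | K k}.
pose F (i : I) x := U (gmul (ginv (proj1_sig i)) x).
have [l Hl] : exists l : list I, forall x, K x -> exists i, In i l /\ F i x.
  apply: hK => [i|x kx]; first exact/open_ltrans/open_fix.
  by exists (exist _ x kx); rewrite /F /= gmulV => w _; exact: act1.
exists (nodup (fun a b => excluded_middle_informative (a = b))
  (List.map (fun i : I => gact act (proj1_sig i) y) l)).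
split=> [|z]; first exact: NoDup_nodup.
rewrite nodup_In in_map_iff; split.
- by move=> [i [<- _]]; exists (proj1_sig i); split=> //; exact: proj2_sig.
- move=> [k [kk ->]]; have [i [il Fi]] := Hl k kk; exists i; split=> //.
  by rewrite -(gmulKV (proj1_sig i) k) gactM // (gact_fix_support ha cov Fi).
Qed.

Lemma orbit_transversal (G : tdlc_group) (A : Type) (act : G -> A -> A) :
  is_action act -> exists rep : A -> A,
    (forall w, exists g, act g (rep w) = w) /\ (forall k w, rep (act k w) = rep w).
Proof.
move=> ha; pose orb w v := exists g, act g v = w.
have orb_self w : exists v, orb w v by exists w, (@gone G); exact: act1.
exists (fun w => epsilon (inhabits w) (orb w)); split=> [w|k w].
  exact: (epsilon_spec (inhabits w) (orb w) (orb_self w)).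
have -> : orb (act k w) = orb w.
  apply: functional_extensionality => v; apply: propositional_extensionality.
  split=> -[g hg]; [exists (gmul (ginv k) g) | exists (gmul k g)];
    by rewrite actM // hg ?actVK.
exact: epsilon_inh_irrelevance.
Qed.

(* Projectivity of proper permutation modules.  Throughout, φ : Q[A] -> Q[C]
   and δ : Q[B] -> Q[C] are G-maps, A has compact stabilisers and B open
   ones (so that Q[B] is a discrete module). *)
Section Lifting.
Variables (G : tdlc_group) (A B C : Type).
Variables (actA : G -> A -> A) (actB : G -> B -> B) (actC : G -> C -> C).
Hypothesis hA : is_action actA.
Hypothesis hA_compact : forall a, compact (@gopen G) (stab actA a).
Hypothesis hB : is_action actB.
Hypothesis hB_open : forall w, gopen (stab actB w).
Variables (phi : (A -> rat) -> (C -> rat)) (del : (B -> rat) -> (C -> rat)).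
Hypothesis hphi : is_morph actA actC phi.
Hypothesis hdel : is_morph actB actC del.

(* A preimage of φ(a) can be made invariant under the stabiliser K of a by
   averaging it over its finite K-orbit; all orbit points are preimages of
   φ(a) since K fixes a. *)
Lemma invariant_preimage a y0 : finsupp y0 -> del y0 = phi (dlt a) ->
  exists z, finsupp z /\ del z = phi (dlt a) /\
    forall k, stab actA a k -> gact actB k z = z.
Proof.
move=> fy0 dy0.
have [Y [ndY HY]] := finite_orbit hB hB_open (@hA_compact a) fy0.
have y0Y : In y0 Y by apply/HY; exists (@gone G); split; [exact: stab1 | rewrite gact1].
have fY z : In z Y -> finsupp z by move=> /HY [k [_ ->]]; exact: finsupp_gact.
have dY z : In z Y -> del z = phi (dlt a).
  move=> /HY [k [kk ->]]; rewrite (mgact hdel) // dy0 -(mgact hphi _ (finsupp_dlt a)).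
  by rewrite (gact_dlt _ _ hA) kk.
pose c := ((size Y)%:R : rat)^-1.
have Yn0 : ((size Y)%:R : rat) != 0 by rewrite pnatr_eq0; case: (Y) y0Y.
exists (lc Y (fun _ => c) (fun z => z)); split; [|split].
- exact: finsupp_lc.
- rewrite (mlc hdel) //; apply: functional_extensionality => u.
  rewrite /lc (eq_sum_in (F' := fun _ => c * phi (dlt a) u)) => [|z hz]; last by rewrite dY.
  by rewrite big_const_seq count_predT iter_addr_0 -mulrnAl -mulr_natr mulVf // mul1r.
- move=> k kk; apply: functional_extensionality => u.
  rewrite /gact /lc -(sum_map (gact actB k) (fun z => c * z u) Y).
  apply: sum_perm; apply: NoDup_Permutation => //.
    by apply: Injective_map_NoDup => // f1 f2; apply: gact_inj.
  move=> z; rewrite in_map_iff; split.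
  + move=> [z0 [<- /HY [k0 [kk0 ->]]]]; apply/HY.
    by exists (gmul k k0); split; [exact: stabM | rewrite gactM].
  + move=> /HY [k0 [kk0 ->]]; exists (gact actB (gmul (ginv k) k0) y0); split.
      by rewrite -gactM // gmulKV.
    by apply/HY; exists (gmul (ginv k) k0); split=> //; apply: stabM => //; exact: stabV.
Qed.

(* Vectors z(a) fixed by the stabilisers of the points a extend to a
   G-equivariant assignment w = g.v |-> g.z(v), v running over orbit
   representatives; it is well defined because z(v) is stab(v)-invariant. *)
Lemma equivariant_extension (z : A -> B -> rat) :
  (forall a k, stab actA a k -> gact actB k (z a) = z a) ->
  exists psi : A -> B -> rat,
    (forall k w, psi (actA k w) = gact actB k (psi w)) /\
    (forall w, exists g v, actA g v = w /\ psi w = gact actB g (z v)).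
Proof.
move=> zinv; have [rep [repP repE]] := orbit_transversal hA.
have [gw gwP] := choice (fun w g => actA g (rep w) = w) repP.
exists (fun w => gact actB (gw w) (z (rep w))); split; last first.
  by move=> w; exists (gw w), (rep w).
move=> k w; rewrite repE -gactM //.
have hs : stab actA (rep w) (gmul (ginv (gmul k (gw w))) (gw (actA k w))).
  rewrite /stab actM // -{1}(repE k w) gwP ginvM actM // actVK //.
  by apply: (act_inj hA (g := gw w)); rewrite actKV // gwP.
by rewrite -{1}(gmulKV (gmul k (gw w)) (gw (actA k w))) gactM // (zinv _ _ hs).
Qed.

Lemma linear_extension (psi : A -> B -> rat) :
  (forall w, finsupp (psi w)) -> (forall k w, psi (actA k w) = gact actB k (psi w)) ->
  exists Psi, is_morph actA actB Psi /\
    forall x t, finsupp x -> NoDup t -> covers t x -> Psi x = lc t x psi.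
Proof.
move=> fpsi epsi.
have [T hT] : exists T : (A -> rat) -> list A,
    forall x, finsupp x -> NoDup (T x) /\ covers (T x) x.
  apply: (choice (fun x t => finsupp x -> NoDup t /\ covers t x)) => x.
  case: (classic (finsupp x)) => [/finsupp_nodup [t ht]|nx]; first by exists t.
  by exists nil.
have PsiE x t : finsupp x -> NoDup t -> covers t x -> lc (T x) x psi = lc t x psi.
  move=> fx nt ct; have [n1 c1] := hT x fx; apply: functional_extensionality => u.
  by apply: (sum_indep (x := x)) => // w ->; rewrite mul0r.
exists (fun x => lc (T x) x psi); split; last exact: PsiE.
split; [|split; [|split]].
- by move=> f _; apply: finsupp_lc.
- move=> f1 f2 ff1 ff2 u; have [t [nt [c1 c2]]] := common_cover ff1 ff2.
  rewrite (PsiE _ t (finsupp_add ff1 ff2) nt (covers_add c1 c2)).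
  rewrite (PsiE _ t ff1 nt c1) (PsiE _ t ff2 nt c2) /lc /fadd -big_split.
  by apply: eq_bigr => w _; rewrite mulrDl.
- move=> c f ff u; have [n1 c1] := hT f ff.
  rewrite (PsiE _ (T f) (finsupp_scale c ff) n1 (covers_scale (c := c) c1)) /lc /fscale.
  by rewrite mulr_sumr; apply: eq_bigr => w _; rewrite mulrA.
- move=> g f ff u; have [n1 c1] := hT f ff.
  rewrite (PsiE _ (List.map (actA g) (T f)) (finsupp_gact g hA ff)); last first.
  + by move=> w hw; rewrite -(actKV hA g w); apply: in_map; exact: c1.
  + by apply: Injective_map_NoDup => // x y; apply: act_inj.
  by rewrite /lc sum_map /gact; apply: eq_bigr => w _; rewrite actVK // epsi.
Qed.

(* Projectivity: if every value of φ lifts through δ, so does φ itself, by a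
   G-map.  Lift each basis vector invariantly, then extend. *)
Lemma lift_morph :
  (forall x, finsupp x -> exists y, finsupp y /\ del y = phi x) ->
  exists psi, is_morph actA actB psi /\ forall x, finsupp x -> del (psi x) = phi x.
Proof.
move=> himg.
have [z hz] : exists z : A -> B -> rat, forall a, finsupp (z a) /\
    del (z a) = phi (dlt a) /\ forall k, stab actA a k -> gact actB k (z a) = z a.
  apply: (choice (fun a z => finsupp z /\ del z = phi (dlt a) /\
    forall k, stab actA a k -> gact actB k z = z)) => a.
  have [y0 [fy0 dy0]] := himg _ (finsupp_dlt a); exact: invariant_preimage fy0 dy0.
have [psi [epsi rpsi]] := equivariant_extension (fun a => proj2 (proj2 (hz a))).
have fpsi w : finsupp (psi w).
  by have [g [v [_ ->]]] := rpsi w; apply: finsupp_gact => //; exact: (proj1 (hz v)).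
have dpsi w : del (psi w) = phi (dlt w).
  have [g [v [<- ->]]] := rpsi w; have [fz [dz _]] := hz v.
  by rewrite (mgact hdel) // dz -(mgact hphi _ (finsupp_dlt v)) (gact_dlt _ _ hA).
have [Psi [mPsi ePsi]] := linear_extension fpsi epsi.
exists Psi; split=> // x fx; have [t [nt ct]] := finsupp_nodup fx.
rewrite (ePsi x t fx nt ct) (mlc hdel) // (m_on_basis hphi fx nt ct).
by congr (lc t x _); apply: functional_extensionality.
Qed.

End Lifting.

Section Resolution.
Variables (G : tdlc_group) (n : nat) (Om : nat -> Type).
Variable act : forall i, G -> Om i -> Om i.
Variable d : forall i, (Om i.+1 -> rat) -> (Om i -> rat).
Variable eps : (Om 0%N -> rat) -> rat.
Arguments act : clear implicits. Arguments d : clear implicits.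
Hypothesis hR : ppres n act d eps.

Lemma r_proper k : (k <= n.+1)%N -> proper_gset_fin (act k).
Proof. by case: hR => h _; apply: h. Qed.
Lemma r_action k : (k <= n.+1)%N -> is_action (act k).
Proof. by move=> hk; case: (r_proper hk). Qed.
Lemma r_stab_open k : (k <= n.+1)%N -> forall w, gopen (stab (act k) w).
Proof. by move=> hk w; case: (r_proper hk) => _ [h _]; case: (h w). Qed.
Lemma r_stab_compact k : (k <= n.+1)%N -> forall w, compact (@gopen G) (stab (act k) w).
Proof. by move=> hk w; case: (r_proper hk) => _ [h _]; case: (h w). Qed.
Lemma r_morph k : (k <= n)%N -> is_morph (act k.+1) (act k) (d k).
Proof. by case: hR => _ [h _]; apply: h. Qed.
Lemma r_aug : is_aug (act 0%N) eps.
Proof. by case: hR => _ [_ [h _]]. Qed.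
Lemma r_surj q : exists x, finsupp x /\ eps x = q.
Proof. by case: hR => _ [_ [_ [h _]]]. Qed.

Lemma ker_im k : (k <= n)%N -> forall x : Om k -> rat, finsupp x ->
  (ker_at d eps x <-> exists y, finsupp y /\ d k y = x).
Proof.
case: hR => _ [_ [_ [_ [h0 hi]]]].
have ext (B : Type) (f1 f2 : B -> rat) : f1 =1 f2 <-> f1 = f2.
  by split=> [|->//]; exact: functional_extensionality.
case: k => [|j] hk x fx /=; [rewrite h0 // | rewrite hi //];
  by split=> -[y [fy /ext e]]; exists y; split=> //; apply/ext.
Qed.

Lemma boundary_cycle k : (k <= n)%N -> forall y, finsupp y -> ker_at d eps (d k y).
Proof.
move=> hk y fy; apply/(ker_im hk); first exact: (mfs (r_morph hk)).
by exists y.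
Qed.

Lemma dd0 k : (k < n)%N -> forall y, finsupp y -> d k (d k.+1 y) = @zf _.
Proof.
move=> hk y fy; have := boundary_cycle hk fy => /= h.
by apply: functional_extensionality => w; rewrite h.
Qed.

Lemma lift_boundary k (X : Type) (actX : G -> X -> X) (phi : (X -> rat) -> (Om k -> rat)) :
  (k <= n)%N -> is_action actX -> (forall a, compact (@gopen G) (stab actX a)) ->
  is_morph actX (act k) phi -> (forall x, finsupp x -> ker_at d eps (phi x)) ->
  exists psi, is_morph actX (act k.+1) psi /\ forall x, finsupp x -> d k (psi x) = phi x.
Proof.
move=> hk hX hXc hphi hcyc.
have hk1 : (k.+1 <= n.+1)%N by [].
apply: (lift_morph hX hXc (r_action hk1) (r_stab_open hk1) hphi (r_morph hk)).
by move=> x fx; apply/(ker_im hk (mfs hphi fx)); exact: hcyc.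
Qed.

Lemma lift_augmentation (X : Type) (actX : G -> X -> X) (phi : (X -> rat) -> rat) :
  is_action actX -> (forall a, compact (@gopen G) (stab actX a)) -> is_aug actX phi ->
  exists psi, is_morph actX (act 0%N) psi /\ forall x, finsupp x -> eps (psi x) = phi x.
Proof.
move=> hX hXc hphi.
have [|psi [mpsi epsi]] := lift_morph hX hXc (r_action (leq0n n.+1))
  (r_stab_open (leq0n n.+1)) (aug_morph hphi) (aug_morph r_aug).
  move=> x _; have [y [fy ey]] := r_surj (phi x); exists y; split=> //.
  by apply: functional_extensionality => -[]; rewrite /epsu ey.
by exists psi; split=> // x fx; have := epsi x fx => /(congr1 (fun f => f tt)).
Qed.

End Resolution.

Section Comparison.
Variables (G : tdlc_group) (n : nat).
Variables (Om : nat -> Type) (actO : forall i, G -> Om i -> Om i)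
  (dO : forall i, (Om i.+1 -> rat) -> (Om i -> rat)) (epsO : (Om 0%N -> rat) -> rat).
Variables (La : nat -> Type) (actL : forall i, G -> La i -> La i)
  (dL : forall i, (La i.+1 -> rat) -> (La i -> rat)) (epsL : (La 0%N -> rat) -> rat).
Arguments actO : clear implicits. Arguments dO : clear implicits.
Arguments actL : clear implicits. Arguments dL : clear implicits.
Hypothesis hO : ppres n actO dO epsO.
Hypothesis hL : ppres n actL dL epsL.

(* Comparison data in degree k: G-maps F : Q[Ω_k] -> Q[Λ_k] and
   H : Q[Λ_k] -> Q[Ω_k] sending boundaries to cycles (so that F ∂ and H δ lift
   one degree up), and a G-map E : Q[Ω_k] -> cycles with E = id - H F on
   cycles (the defect of H F to be corrected by a homotopy). *)
Definition comparison (k : nat) : Prop :=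
  exists (F : (Om k -> rat) -> (La k -> rat)) (H : (La k -> rat) -> (Om k -> rat))
    (E : (Om k -> rat) -> (Om k -> rat)),
  is_morph (actO k) (actL k) F /\ is_morph (actL k) (actO k) H /\
  is_morph (actO k) (actO k) E /\
  (forall y, finsupp y -> ker_at dL epsL (F (dO k y))) /\
  (forall y, finsupp y -> ker_at dO epsO (H (dL k y))) /\
  (forall x, finsupp x -> ker_at dO epsO (E x)) /\
  (forall x, finsupp x -> ker_at dO epsO x -> E x = fsub x (H (F x))).

(* Degree 0: F and H lift the augmentations, and E = id - H F. *)
Lemma comparison0 : comparison 0.
Proof.
have l0 : (0 <= n.+1)%N by [].
have [F [mF eF]] := lift_augmentation hL (r_action hO l0) (r_stab_compact hO l0) (r_aug hO).
have [H [mH eH]] := lift_augmentation hO (r_action hL l0) (r_stab_compact hL l0) (r_aug hL).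
exists F, H, (fun x => fsub x (H (F x))); do 2!split=> //.
split; first exact: (is_morph_id_sub (is_morph_comp mF mH)).
split; [|split; [|split=> //]].
- move=> y fy /=; rewrite eF; last exact: (mfs (r_morph hO (leq0n n)) fy).
  exact: (boundary_cycle hO (leq0n n) fy).
- move=> y fy /=; rewrite eH; last exact: (mfs (r_morph hL (leq0n n)) fy).
  exact: (boundary_cycle hL (leq0n n) fy).
- move=> x fx /=; have fF := mfs mF fx; have fHF := mfs mH fF.
  have [augD [augZ _]] := r_aug hO.
  rewrite fsubE augD //; last exact: finsupp_scale.
  by rewrite augZ // eH // eF // mulN1r subrr.
Qed.

(* Inductive step: lift F ∂_k, H δ_k and E through the boundaries to get
   F', H' and a homotopy h; then E' = id - H' F' - h ∂_k takes values in
   cycles, since ∂ E' = ∂ - H F ∂ - E ∂ = 0. *)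
Lemma comparison_step k : (k < n)%N -> comparison k -> comparison k.+1.
Proof.
move=> hk [F [H [E [mF [mH [mE [cF [cH [cE eE]]]]]]]]].
have hk1 : (k <= n)%N by apply: ltnW.
have hk2 : (k.+1 <= n.+1)%N by [].
have mdO := r_morph hO hk1; have mdL := r_morph hL hk1.
have [F' [mF' eF']] := lift_boundary hL hk1 (r_action hO hk2) (r_stab_compact hO hk2)
  (is_morph_comp mdO mF) cF.
have [H' [mH' eH']] := lift_boundary hO hk1 (r_action hL hk2) (r_stab_compact hL hk2)
  (is_morph_comp mdL mH) cH.
have [h [mh eh]] := lift_boundary hO hk1 (r_action hO (leqW hk1))
  (r_stab_compact hO (leqW hk1)) mE cE.
exists F', H', (fun x => fsub (fsub x (H' (F' x))) (h (dO k x))).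
do 2!split=> //.
split; first exact: (is_morph_sub (is_morph_id_sub (is_morph_comp mF' mH')) (is_morph_comp mdO mh)).
split; [|split; [|split]].
- move=> y fy /= w; rewrite eF'; last exact: (mfs (r_morph hO hk) fy).
  by rewrite (dd0 hO hk fy) (m0 mF).
- move=> y fy /= w; rewrite eH'; last exact: (mfs (r_morph hL hk) fy).
  by rewrite (dd0 hL hk fy) (m0 mH).
- move=> x fx /= w.
  have fF := mfs mF' fx; have fHF := mfs mH' fF; have fdx := mfs mdO fx.
  have fh := mfs mh fdx; have fxHF := finsupp_sub fx fHF.
  rewrite !(msub mdO) // eH' // eF' // eh //.
  by rewrite (eE _ fdx (boundary_cycle hO hk1 fx)) /fsub; ring.
- move=> x fx /= hx.
  have -> : dO k x = @zf _ by apply: functional_extensionality => w; rewrite hx.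
  by rewrite (m0 mh); apply: functional_extensionality => u; rewrite /fsub /zf subr0.
Qed.

Lemma comparison_all k : (k <= n)%N -> comparison k.
Proof.
elim: k => [|k IH] hk; first exact: comparison0.
by apply: comparison_step => //; apply: IH; apply: ltnW.
Qed.

(* The maps used to fill a cycle x of Q[Ω_n]: F sends x to a cycle of Q[Λ_n];
   if δ y = F x, then H' y + h x fills x, where H', h lift H δ and E. *)
Lemma filling_maps : exists F H' h,
  [/\ is_morph (actO n) (actL n) F, is_morph (actL n.+1) (actO n.+1) H',
      is_morph (actO n) (actO n.+1) h,
      forall x, finsupp x -> ker_at dO epsO x -> ker_at dL epsL (F x) &
      forall x y, finsupp x -> ker_at dO epsO x -> finsupp y -> dL n y = F x ->
        dO n (fadd (H' y) (h x)) = x].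
Proof.
have [F [H [E [mF [mH [mE [cF [cH [cE eE]]]]]]]]] := comparison_all (leqnn n).
have hn : (n <= n.+1)%N by [].
have [H' [mH' eH']] := lift_boundary hO (leqnn n) (r_action hL (leqnn n.+1))
  (r_stab_compact hL (leqnn n.+1)) (is_morph_comp (r_morph hL (leqnn n)) mH) cH.
have [h [mh eh]] := lift_boundary hO (leqnn n) (r_action hO hn) (r_stab_compact hO hn) mE cE.
exists F, H', h; split=> //.
- move=> x fx kx; have [z [fz <-]] := proj1 (ker_im hO (leqnn n) fx) kx; exact: cF.
- move=> x y fx kx fy dy.
  have fHy := mfs mH' fy; have fhx := mfs mh fx.
  rewrite (madd (r_morph hO (leqnn n))) // eH' // eh // dy.
  by rewrite (eE _ fx kx); apply: functional_extensionality => u; rewrite /fadd /fsub; ring.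
Qed.

(* Transfer of the isoperimetric inequality from (Λ, δ) to (Ω, ∂): the
   filling H' y + h x of a cycle x has norm at most
   M_H (C M_F |x| + e') + M_h |x|, where M_F, M_H, M_h bound F, H', h. *)
Lemma weak_iso_transfer : weak_iso n dL epsL -> weak_iso n dO epsO.
Proof.
move=> [C [C0 HC]]; have [F [H' [h [mF mH' mh cF fill]]]] := filling_maps.
have hn : (n <= n.+1)%N by [].
have [MF [MF0 bF]] := morph_l1_bounded (r_proper hO hn) (r_action hL hn) mF.
have [MH [MH0 bH]] := morph_l1_bounded (r_proper hL (leqnn n.+1)) (r_action hO (leqnn n.+1)) mH'.
have [Mh [Mh0 bh]] := morph_l1_bounded (r_proper hO hn) (r_action hO (leqnn n.+1)) mh.
exists (MH * C * MF + Mh + 1); split; first by rewrite ltr_pwDr // addr_ge0 // !mulr_ge0 // ltW.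
move=> x fx kx _ [t [nt [ct ->]]] e e0.
pose e' := e / (MH + 1).
have e'0 : 0 < e' by rewrite divr_gt0 // ltr_pwDr.
have e'E : (MH + 1) * e' = e by rewrite mulrC divfK // lt0r_neq0 // ltr_pwDr.
have [tF [ntF ctF]] := finsupp_nodup (mfs mF fx).
have [y [fy [/functional_extensionality dy [_ [[ty [nty [cty ->]]] hy]]]]] :=
  HC _ (mfs mF fx) (cF x fx kx) _ (is_l1_l1 ntF ctF) e' e'0.
have fout : finsupp (fadd (H' y) (h x)) by apply: finsupp_add; [exact: (mfs mH') | exact: (mfs mh)].
exists (fadd (H' y) (h x)); split=> //; split=> [u|]; first by rewrite fill.
have [to [nto cto]] := finsupp_nodup fout.
exists (l1 to (fadd (H' y) (h x))); split; first exact: is_l1_l1.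
have nF := bF x t tF fx nt ct ntF; have nH := bH y ty to fy nty cty nto.
have nh := bh x t to fx nt ct nto; have nadd := l1_add to (H' y) (h x).
rewrite -/(l1 t x); rewrite -/(l1 ty y) in hy.
have nHy := ler_wpM2l MH0 hy; have nFx := ler_wpM2l (mulr_ge0 MH0 (ltW C0)) nF.
have nx := l1_ge0 t x.
lra.
Qed.

End Comparison.

Theorem proposition4p6 (G : tdlc_group) (n : nat) (hFP : type_FP G n.+1)
  (Om : nat -> Type) (actO : forall i, G -> Om i -> Om i)
  (dO : forall i, (Om i.+1 -> rat) -> (Om i -> rat)) (epsO : (Om 0%N -> rat) -> rat)
  (hO : ppres n actO dO epsO)
  (La : nat -> Type) (actL : forall i, G -> La i -> La i)
  (dL : forall i, (La i.+1 -> rat) -> (La i -> rat)) (epsL : (La 0%N -> rat) -> rat)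
  (hL : ppres n actL dL epsL) :
  weak_iso n dL epsL <-> weak_iso n dO epsO.
Proof. by split; [exact: (weak_iso_transfer hO hL) | exact: (weak_iso_transfer hL hO)]. Qed.
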